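(* Let $1<p<\infty$ be fixed. Let $(\lambda_n)_{n\ge1}$ be positive real numbers, $\Lambda_n=\sum_{i=1}^n\lambda_i$, and let $A=(a_{n,k})$ be the weighted mean matrix with $a_{n,k}=\lambda_k/\Lambda_n$ for $1\le k\le n$ and $a_{n,k}=0$ for $k>n$. Suppose there exists a constant $L$ with $0<L<p$ such that for every integer $n\ge1$, \[ \sum_{k=1}^{n}\frac{\lambda_k}{\Lambda_n}\prod_{i=k}^{n}\Big(\frac{\Lambda_{i+1}/\lambda_{i+1}-L/p}{\Lambda_i/\lambda_i}\Big)^{1/(p-1)}\le \frac{p}{p-L}. \] Then $\|A\|_{p,p}\le \frac{p}{p-L}$.
   Context: For $p\ge1$, $l^p$ denotes the space of complex sequences $\mathbf a=(a_n)_{n\ge1}$ with $\|\mathbf a\|_p=(\sum_n|a_n|^p)^{1/p}<\infty$. For an infinite matrix $C=(c_{n,k})$, $\|C\|_{p,p}=\sup_{\|\mathbf a\|_p=1}\|C\mathbf a\|_p$, where $(C\mathbf a)_n=\sum_k c_{n,k}a_k$; equivalently the conclusion says $\sum_{n=1}^\infty\big|\sum_{k=1}^n\frac{\lambda_k a_k}{\Lambda_n}\big|^p\le\big(\frac{p}{p-L}\big)^p\sum_{n=1}^\infty|a_n|^p$ for all $\mathbf a\in l^p$. *)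

From Stdlib Require Import Reals Lra.
From Coquelicot Require Import Coquelicot.
Open Scope R_scope.

(* Sequences are indexed from 0 here: index j corresponds to index j+1 of the paper. *)

(* x^p for x >= 0 and real p > 0, with the convention 0^p = 0
   (Stdlib's Rpower 0 p = 1, which is wrong for the l^p norm). *)
Definition rpow (x p : R) : R := if Rle_dec x 0 then 0 else Rpower x p.

Definition Lam (lam : nat -> R) (n : nat) : R := sum_f_R0 lam n.

Fixpoint prod_from_to (f : nat -> R) (k n : nat) : R :=
  match n with
  | O => if Nat.leb k 0 then f 0%nat else 1
  | S m => if Nat.leb k (S m) then prod_from_to f k m * f (S m) else 1
  end.

Definition wmean (lam : nat -> R) (a : nat -> C) (n : nat) : C :=
  sum_n (fun k => Cmult (RtoC (lam k / Lam lam n)) (a k)) n.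

Definition cond_term (lam : nat -> R) (p L : R) (n : nat) : R :=
  sum_f_R0 (fun k => lam k / Lam lam n *
     prod_from_to (fun i =>
        Rpower ((Lam lam (S i) / lam (S i) - L / p) / (Lam lam i / lam i)) (1 / (p - 1)))
       k n) n.

(* For a fixed row n, Jensen's inequality with the weights
   [lam k / Lam n * G k n ^ (1/(p-1))], where [G k n = theta k * ... * theta n] is the
   product appearing in the hypothesis, bounds [(sum_k lam k / Lam n * b k) ^ p] by
   [(p/(p-L)) ^ (p-1) * sum_k lam k / (Lam n * G k n) * b k ^ p]; the hypothesis says
   exactly that the total weight is at most [p/(p-L)].  Summing over n and exchanging the
   sums, the column sums [sum_(n >= k) lam k / (Lam n * G k n)] telescope, since
   [theta n / lam n - 1 / lam (n+1) = (1 - L/p) / Lam n], and are therefore at most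
   [p/(p-L)]. *)

From Stdlib Require Import Reals Lra Lia.
From Coquelicot Require Import Coquelicot.
Open Scope R_scope.

Lemma Rpower_pos (x e : R) : 0 < Rpower x e.
Proof. apply exp_pos. Qed.

Lemma Rpower_sub1 (x e : R) : 0 < x -> Rpower x e = Rpower x (e - 1) * x.
Proof.
  intros Hx. rewrite <- (Rpower_1 x Hx) at 3.
  rewrite <- Rpower_plus. f_equal. ring.
Qed.

Lemma Rpower_Rinv (x e : R) : 0 < x -> Rpower (/ x) e = / Rpower x e.
Proof.
  intros Hx. rewrite <- Rpower_Ropp. unfold Rpower.
  rewrite ln_Rinv by assumption. f_equal; ring.
Qed.

Lemma rpow_Rpower (x e : R) : 0 < x -> rpow x e = Rpower x e.
Proof. intros Hx. unfold rpow. destruct (Rle_dec x 0); [lra | reflexivity]. Qed.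

Lemma rpow_nonpos (x e : R) : x <= 0 -> rpow x e = 0.
Proof. intros Hx. unfold rpow. destruct (Rle_dec x 0); [reflexivity | lra]. Qed.

Lemma rpow_ge0 (x e : R) : 0 <= rpow x e.
Proof. unfold rpow. destruct (Rle_dec x 0); [lra | left; apply Rpower_pos]. Qed.

Lemma rpow_mult (x y e : R) : 0 <= x -> 0 <= y -> rpow (x * y) e = rpow x e * rpow y e.
Proof.
  intros [Hx | <-] [Hy | <-];
    try (rewrite ?Rmult_0_l, ?Rmult_0_r, !(rpow_nonpos 0) by lra; ring).
  rewrite !rpow_Rpower by nra. symmetry. apply Rpower_mult_distr; assumption.
Qed.

Lemma rpow_le (x y e : R) : 0 <= e -> 0 <= x <= y -> rpow x e <= rpow y e.
Proof.
  intros He [[Hx | <-] Hxy].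
  - rewrite !rpow_Rpower by lra. apply Rle_Rpower_l; lra.
  - rewrite rpow_nonpos by lra. apply rpow_ge0.
Qed.

Lemma Rpower_ge_bernoulli (t e : R) : 1 < e -> 0 < t -> 1 + e * (t - 1) <= Rpower t e.
Proof.
  intros He Ht.
  assert (Hexp : 1 + (e - 1) * ln t <= Rpower t (e - 1)).
  { unfold Rpower. rewrite Rmult_comm. apply exp_ineq1_le. }
  assert (Hlog : 1 - / t <= ln t).
  { pose proof (exp_ineq1_le (- ln t)) as H.
    rewrite exp_Ropp, exp_ln in H by assumption. lra. }
  assert (Hlog' : t - 1 <= t * ln t).
  { replace (t - 1) with (t * (1 - / t)) by (field; lra). apply Rmult_le_compat_l; lra. }
  rewrite (Rpower_sub1 t e Ht). nra.
Qed.

Lemma rpow_ge_tangent (x m e : R) : 1 < e -> 0 < m -> 0 <= x ->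
  Rpower m (e - 1) * (e * x - (e - 1) * m) <= rpow x e.
Proof.
  intros He Hm Hx. pose proof (Rpower_pos m (e - 1)) as Hme.
  destruct Hx as [Hx | <-].
  2:{ rewrite rpow_nonpos by lra. assert (0 < (e - 1) * m) by nra. nra. }
  set (t := x / m).
  assert (Ht : 0 < t) by (apply Rdiv_lt_0_compat; assumption).
  assert (Hxt : x = m * t) by (unfold t; field; lra).
  pose proof (Rpower_ge_bernoulli t e He Ht) as Hb.
  rewrite rpow_Rpower by lra. rewrite Hxt, <- Rpower_mult_distr, (Rpower_sub1 m e Hm) by lra.
  assert (0 < Rpower m (e - 1) * m) by nra.
  nra.
Qed.

Lemma rpow_sum_le_jensen (e : R) (w x : nat -> R) (n : nat) : 1 < e ->
  (forall k, 0 <= w k) -> (forall k, 0 <= x k) -> 0 < sum_f_R0 w n ->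
  rpow (sum_f_R0 (fun k => w k * x k) n) e <=
  Rpower (sum_f_R0 w n) (e - 1) * sum_f_R0 (fun k => w k * rpow (x k) e) n.
Proof.
  intros He Hw Hx HW.
  set (W := sum_f_R0 w n). set (M := sum_f_R0 (fun k => w k * x k) n).
  assert (HM : 0 <= M) by (apply cond_pos_sum; intros; apply Rmult_le_pos; auto).
  pose proof (Rpower_pos W (e - 1)) as HWe.
  destruct HM as [HM | HM].
  2:{ rewrite <- HM, rpow_nonpos by lra. apply Rmult_le_pos; [lra |].
      apply cond_pos_sum; intros; apply Rmult_le_pos; [auto | apply rpow_ge0]. }
  (* Sum the tangent-line inequality at the weighted mean [m = M / W]. *)
  set (m := M / W).
  assert (Hm : 0 < m) by (apply Rdiv_lt_0_compat; assumption).
  pose proof (Rpower_pos m (e - 1)) as Hme.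
  assert (Htangent :
    e * Rpower m (e - 1) * M - (e - 1) * m * Rpower m (e - 1) * W <=
    sum_f_R0 (fun k => w k * rpow (x k) e) n).
  { unfold M, W. rewrite !scal_sum, <- minus_sum.
    apply sum_Rle. intros k _.
    replace (w k * x k * (e * Rpower m (e - 1)) - w k * ((e - 1) * m * Rpower m (e - 1)))
      with (w k * (Rpower m (e - 1) * (e * x k - (e - 1) * m))) by ring.
    apply Rmult_le_compat_l; [apply Hw | apply rpow_ge_tangent; auto]. }
  assert (HmW : m * W = M) by (unfold m; field; apply Rgt_not_eq; exact HW).
  rewrite rpow_Rpower, (Rpower_sub1 M e HM) by assumption.
  replace (Rpower M (e - 1)) with (Rpower W (e - 1) * Rpower m (e - 1))
    by (rewrite Rpower_mult_distr, Rmult_comm, HmW by assumption; reflexivity).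
  rewrite Rmult_assoc. apply Rmult_le_compat_l; [lra |]. nra.
Qed.

Lemma rpow_sum_le_weighted (e : R) (w b P : nat -> R) (n : nat) : 1 < e ->
  (forall k, 0 <= w k) -> (forall k, 0 <= b k) -> (forall k, 0 < P k) ->
  0 < sum_f_R0 (fun k => w k * P k) n ->
  rpow (sum_f_R0 (fun k => w k * b k) n) e <=
  Rpower (sum_f_R0 (fun k => w k * P k) n) (e - 1) *
    sum_f_R0 (fun k => w k / Rpower (P k) (e - 1) * rpow (b k) e) n.
Proof.
  intros He Hw Hb HP HWP.
  pose proof (rpow_sum_le_jensen e (fun k => w k * P k) (fun k => b k / P k) n He
    (fun k => Rmult_le_pos _ _ (Hw k) (Rlt_le _ _ (HP k)))
    (fun k => Rdiv_le_0_compat _ _ (Hb k) (HP k)) HWP) as J.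
  rewrite (sum_eq (fun k => w k * P k * (b k / P k)) (fun k => w k * b k)) in J
    by (intros k _; field; apply Rgt_not_eq, HP).
  rewrite (sum_eq (fun k => w k * P k * rpow (b k / P k) e)
                  (fun k => w k / Rpower (P k) (e - 1) * rpow (b k) e)) in J.
  - exact J.
  - intros k _. pose proof (HP k). pose proof (Hb k).
    assert (0 < / P k) by (apply Rinv_0_lt_compat; assumption).
    unfold Rdiv. rewrite rpow_mult, (rpow_Rpower (/ P k)), Rpower_Rinv, (Rpower_sub1 (P k) e)
      by lra.
    pose proof (Rpower_pos (P k) (e - 1)). field. lra.
Qed.

Lemma prod_from_to_empty (f : nat -> R) (k n : nat) : (n < k)%nat -> prod_from_to f k n = 1.
Proof.
  intros H. destruct n as [| n]; simpl.
  - destruct k; [lia | reflexivity].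
  - destruct (Nat.leb_spec k (S n)); [lia | reflexivity].
Qed.

Lemma prod_from_to_S (f : nat -> R) (k n : nat) : (k <= S n)%nat ->
  prod_from_to f k (S n) = prod_from_to f k n * f (S n).
Proof. intros H. simpl. destruct (Nat.leb_spec k (S n)); [reflexivity | lia]. Qed.

Lemma prod_from_to_diag (f : nat -> R) (k : nat) : prod_from_to f k k = f k.
Proof.
  destruct k as [| k]; [reflexivity |].
  rewrite prod_from_to_S, prod_from_to_empty by lia. ring.
Qed.

Lemma prod_from_to_pos (f : nat -> R) (k n : nat) : (forall i, 0 < f i) -> 0 < prod_from_to f k n.
Proof.
  intros Hf. induction n as [| n IHn]; simpl.
  - destruct (Nat.leb k 0); [apply Hf | lra].
  - destruct (Nat.leb k (S n)); [apply Rmult_lt_0_compat; auto | lra].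
Qed.

Lemma prod_from_to_Rpower (f : nat -> R) (e : R) (k n : nat) : (forall i, 0 < f i) ->
  prod_from_to (fun i => Rpower (f i) e) k n = Rpower (prod_from_to f k n) e.
Proof.
  intros Hf.
  assert (Hone : Rpower 1 e = 1) by (unfold Rpower; rewrite ln_1, Rmult_0_r; apply exp_0).
  induction n as [| n IHn]; simpl.
  - destruct (Nat.leb k 0); [reflexivity | auto].
  - destruct (Nat.leb k (S n)); [| auto].
    rewrite IHn. apply Rpower_mult_distr; [apply prod_from_to_pos |]; auto.
Qed.

Lemma sum_n_m_R_empty (a : nat -> R) (k N : nat) : (N < k)%nat -> sum_n_m a k N = 0.
Proof. intros H. rewrite sum_n_m_zero by exact H. reflexivity. Qed.

Lemma sum_n_m_Rmult_l (c : R) (a : nat -> R) (k N : nat) :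
  c * sum_n_m a k N = sum_n_m (fun n => c * a n) k N.
Proof. symmetry. exact (sum_n_m_mult_l (K := R_Ring) c a k N). Qed.

Lemma sum_n_m_Rmult_r (c : R) (a : nat -> R) (k N : nat) :
  sum_n_m a k N * c = sum_n_m (fun n => a n * c) k N.
Proof. symmetry. exact (sum_n_m_mult_r (K := R_Ring) c a k N). Qed.

Lemma sum_n_m_telescope (e : nat -> R) (k N : nat) : (k <= S N)%nat ->
  sum_n_m (fun n => e n - e (S n)) k N = e k - e (S N).
Proof.
  induction N as [| N IHN]; intros Hk.
  - destruct k as [| [| k]]; [now rewrite sum_n_n | | lia].
    rewrite sum_n_m_R_empty by lia. simpl. ring.
  - destruct (Nat.eq_dec k (S (S N))) as [-> | Hne].
    + rewrite sum_n_m_R_empty by lia. simpl. ring.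
    + rewrite sum_n_Sm, IHN by lia. unfold plus. simpl. ring.
Qed.

Lemma sum_f_R0_triangle_swap (w : nat -> nat -> R) (N : nat) :
  sum_f_R0 (fun n => sum_f_R0 (fun k => w k n) n) N =
  sum_f_R0 (fun k => sum_n_m (w k) k N) N.
Proof.
  induction N as [| N IHN]; simpl.
  - symmetry. apply sum_n_n.
  - rewrite IHN, sum_n_n,
      (sum_eq (fun k => sum_n_m (w k) k (S N)) (fun k => sum_n_m (w k) k N + w k (S N)))
      by (intros k Hk; rewrite sum_n_Sm by lia; reflexivity).
    rewrite plus_sum. ring.
Qed.

Section WeightedMean.

Variables (p L : R) (lam : nat -> R).
Hypothesis Hp : 1 < p.
Hypothesis Hlam : forall n, 0 < lam n.
Hypothesis HLp : L < p.

Lemma lam_le_Lam (n : nat) : lam n <= Lam lam n.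
Proof.
  destruct n as [| n]; unfold Lam; simpl; [lra |].
  pose proof (cond_pos_sum lam n (fun k => Rlt_le _ _ (Hlam k))). lra.
Qed.

Lemma Lam_pos (n : nat) : 0 < Lam lam n.
Proof. pose proof (lam_le_Lam n). pose proof (Hlam n). lra. Qed.

Lemma one_sub_L_div_p_pos : 0 < 1 - L / p.
Proof. replace (1 - L / p) with ((p - L) / p) by (field; lra). apply Rdiv_lt_0_compat; lra. Qed.

Definition theta (i : nat) : R :=
  (Lam lam (S i) / lam (S i) - L / p) / (Lam lam i / lam i).

Definition theta_prod (k n : nat) : R := prod_from_to theta k n.

Lemma theta_pos (i : nat) : 0 < theta i.
Proof.
  pose proof (lam_le_Lam (S i)). pose proof (Lam_pos i).
  pose proof (Hlam i). pose proof (Hlam (S i)).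
  assert (1 <= Lam lam (S i) / lam (S i)).
  { apply (Rmult_le_reg_r (lam (S i))); [assumption |]. field_simplify; lra. }
  pose proof one_sub_L_div_p_pos.
  unfold theta. apply Rdiv_lt_0_compat; [lra | apply Rdiv_lt_0_compat; assumption].
Qed.

Lemma theta_prod_pos (k n : nat) : 0 < theta_prod k n.
Proof. apply prod_from_to_pos, theta_pos. Qed.

Lemma theta_div_sub_inv (i : nat) : theta i / lam i - / lam (S i) = (1 - L / p) / Lam lam i.
Proof.
  pose proof (Lam_pos i). pose proof (Hlam i). pose proof (Hlam (S i)).
  unfold theta, Lam. simpl. fold (Lam lam i). field. lra.
Qed.

Lemma column_sum_eq (k N : nat) : (k <= S N)%nat ->
  (1 - L / p) * sum_n_m (fun n => lam k / Lam lam n / theta_prod k n) k N =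
  1 - lam k / (theta_prod k N * lam (S N)).
Proof.
  intros Hk.
  (* [e n] is [lam k / (theta_prod k (n - 1) * lam n)], written without the predecessor. *)
  set (e := fun n => lam k * theta n / (theta_prod k n * lam n)).
  rewrite sum_n_m_Rmult_l.
  rewrite (sum_n_m_ext_loc _ (fun n => e n - e (S n))).
  - rewrite sum_n_m_telescope by assumption. unfold e.
    unfold theta_prod. rewrite prod_from_to_S, prod_from_to_diag by assumption.
    fold (theta_prod k N).
    pose proof (theta_pos k). pose proof (Hlam k). pose proof (theta_pos (S N)).
    pose proof (theta_prod_pos k N). pose proof (Hlam (S N)).
    field. lra.
  - intros n Hn. simpl. unfold e, theta_prod. rewrite prod_from_to_S by lia. fold (theta_prod k n).
    pose proof (theta_div_sub_inv n) as Htel.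
    pose proof (theta_pos n). pose proof (theta_pos (S n)). pose proof (theta_prod_pos k n).
    pose proof (Hlam n). pose proof (Hlam (S n)). pose proof (Lam_pos n).
    replace ((1 - L / p) * (lam k / Lam lam n / theta_prod k n))
      with (lam k / theta_prod k n * ((1 - L / p) / Lam lam n)) by (field; lra).
    rewrite <- Htel. field. lra.
Qed.

Lemma column_sum_le (k N : nat) :
  sum_n_m (fun n => lam k / Lam lam n / theta_prod k n) k N <= p / (p - L).
Proof.
  assert (HU : 0 < p / (p - L)) by (apply Rdiv_lt_0_compat; lra).
  destruct (Compare_dec.le_lt_dec k (S N)) as [Hk | Hk].
  2:{ rewrite sum_n_m_R_empty by lia. lra. }
  pose proof (column_sum_eq k N Hk) as Hcol.
  assert (0 < lam k / (theta_prod k N * lam (S N))).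
  { apply Rdiv_lt_0_compat; [apply Hlam |].
    apply Rmult_lt_0_compat; [apply theta_prod_pos | apply Hlam]. }
  replace (p / (p - L)) with (/ (1 - L / p)) by (field; lra).
  pose proof one_sub_L_div_p_pos as Hq.
  apply (Rmult_le_reg_l (1 - L / p)); [assumption |].
  rewrite Rinv_r by lra. lra.
Qed.

Lemma row_rpow_le (b : nat -> R) (n : nat) : (forall k, 0 <= b k) ->
  cond_term lam p L n <= p / (p - L) ->
  rpow (sum_f_R0 (fun k => lam k / Lam lam n * b k) n) p <=
  Rpower (p / (p - L)) (p - 1) *
    sum_f_R0 (fun k => lam k / Lam lam n / theta_prod k n * rpow (b k) p) n.
Proof.
  intros Hb Hcond.
  set (P := fun k => Rpower (theta_prod k n) (1 / (p - 1))).
  assert (HP : forall k, 0 < P k) by (intros; apply Rpower_pos).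
  assert (Hw : forall k, 0 < lam k / Lam lam n)
    by (intros; apply Rdiv_lt_0_compat; [apply Hlam | apply Lam_pos]).
  assert (Hcond_eq : cond_term lam p L n = sum_f_R0 (fun k => lam k / Lam lam n * P k) n).
  { unfold cond_term, P, theta_prod. apply sum_eq. intros k _.
    f_equal. apply prod_from_to_Rpower, theta_pos. }
  assert (HPe : forall k, Rpower (P k) (p - 1) = theta_prod k n).
  { intros k. unfold P. rewrite Rpower_mult.
    replace (1 / (p - 1) * (p - 1)) with 1 by (field; lra).
    apply Rpower_1, theta_prod_pos. }
  assert (HS : 0 < sum_f_R0 (fun k => lam k / Lam lam n * P k) n).
  { apply tech1. intros k _. apply Rmult_lt_0_compat; auto. }
  pose proof (rpow_sum_le_weighted p (fun k => lam k / Lam lam n) b P n Hp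
    (fun k => Rlt_le _ _ (Hw k)) Hb HP HS) as Hweighted.
  eapply Rle_trans; [exact Hweighted |].
  rewrite (sum_eq (fun k => lam k / Lam lam n / Rpower (P k) (p - 1) * rpow (b k) p)
                  (fun k => lam k / Lam lam n / theta_prod k n * rpow (b k) p))
    by (intros k _; rewrite HPe; reflexivity).
  apply Rmult_le_compat_r.
  - apply cond_pos_sum. intros k. apply Rmult_le_pos; [| apply rpow_ge0].
    apply Rlt_le, Rdiv_lt_0_compat; [apply Hw | apply theta_prod_pos].
  - apply Rle_Rpower_l; [lra |]. rewrite <- Hcond_eq. split; [rewrite Hcond_eq |]; assumption.
Qed.

Lemma wmean_rpow_sum_le (b : nat -> R) (N : nat) :
  (forall n, cond_term lam p L n <= p / (p - L)) -> (forall k, 0 <= b k) ->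
  sum_f_R0 (fun n => rpow (sum_f_R0 (fun k => lam k / Lam lam n * b k) n) p) N <=
  Rpower (p / (p - L)) p * sum_f_R0 (fun k => rpow (b k) p) N.
Proof.
  intros Hcond Hb.
  set (U := p / (p - L)).
  assert (HU : 0 < U) by (apply Rdiv_lt_0_compat; lra).
  set (w := fun k n => lam k / Lam lam n / theta_prod k n * rpow (b k) p).
  assert (Hrows :
    sum_f_R0 (fun n => rpow (sum_f_R0 (fun k => lam k / Lam lam n * b k) n) p) N <=
    Rpower U (p - 1) * sum_f_R0 (fun n => sum_f_R0 (fun k => w k n) n) N).
  { rewrite scal_sum. apply sum_Rle. intros n _. rewrite Rmult_comm. apply row_rpow_le; auto. }
  assert (Hcols :
    sum_f_R0 (fun n => sum_f_R0 (fun k => w k n) n) N <= U * sum_f_R0 (fun k => rpow (b k) p) N).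
  { rewrite sum_f_R0_triangle_swap, scal_sum. apply sum_Rle. intros k _.
    unfold w. rewrite <- sum_n_m_Rmult_r, Rmult_comm.
    apply Rmult_le_compat_l; [apply rpow_ge0 | apply column_sum_le]. }
  rewrite (Rpower_sub1 U p HU), Rmult_assoc.
  eapply Rle_trans; [exact Hrows |].
  apply Rmult_le_compat_l; [left; apply Rpower_pos | exact Hcols].
Qed.

End WeightedMean.

Lemma Cmod_sum_n_le (u : nat -> C) (n : nat) : Cmod (sum_n u n) <= sum_f_R0 (fun k => Cmod (u k)) n.
Proof.
  induction n as [| n IHn].
  - rewrite sum_O. simpl. lra.
  - rewrite sum_Sn. simpl. eapply Rle_trans; [apply Cmod_triangle |]. simpl in IHn. lra.
Qed.

Lemma Cmod_wmean_le (lam : nat -> R) (a : nat -> C) (n : nat) : (forall n, 0 < lam n) ->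
  Cmod (wmean lam a n) <= sum_f_R0 (fun k => lam k / Lam lam n * Cmod (a k)) n.
Proof.
  intros Hlam. unfold wmean. eapply Rle_trans; [apply Cmod_sum_n_le |].
  right. apply sum_eq. intros k _.
  rewrite Cmod_mult, Cmod_R, Rabs_pos_eq; [reflexivity |].
  apply Rlt_le, Rdiv_lt_0_compat; [apply Hlam | apply Lam_pos, Hlam].
Qed.

Lemma sum_f_R0_le_Series (g : nat -> R) (N : nat) : (forall k, 0 <= g k) -> ex_series g ->
  sum_f_R0 g N <= Series g.
Proof.
  intros Hg Hex. rewrite <- sum_n_Reals. apply is_lim_seq_incr_compare.
  - apply (Series_correct g Hex).
  - intros n. rewrite !sum_n_Reals. simpl. pose proof (Hg (S n)). lra.
Qed.

Lemma ex_series_Series_le_of_partial (f : nat -> R) (B : R) : (forall n, 0 <= f n) ->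
  (forall N, sum_f_R0 f N <= B) -> ex_series f /\ Series f <= B.
Proof.
  intros Hf HB.
  assert (Hincr : forall n, sum_n f n <= sum_n f (S n)).
  { intros n. rewrite !sum_n_Reals. simpl. pose proof (Hf (S n)). lra. }
  assert (Hbound : forall n, sum_n f n <= B) by (intros n; rewrite sum_n_Reals; apply HB).
  destruct (ex_finite_lim_seq_incr _ _ Hincr Hbound) as [l Hl].
  split; [exists l; exact Hl |].
  rewrite (is_series_unique f l Hl).
  exact (is_lim_seq_le _ _ l B Hbound Hl (is_lim_seq_const B)).
Qed.

Theorem theorem3p1 (p L : R) (lam : nat -> R) :
  1 < p ->
  (forall n, 0 < lam n) ->
  0 < L -> L < p ->
  (forall n : nat, cond_term lam p L n <= p / (p - L)) ->
  forall a : nat -> C,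
    ex_series (fun n => rpow (Cmod (a n)) p) ->
    ex_series (fun n => rpow (Cmod (wmean lam a n)) p) /\
    Series (fun n => rpow (Cmod (wmean lam a n)) p)
      <= rpow (p / (p - L)) p * Series (fun n => rpow (Cmod (a n)) p).
Proof.
  intros Hp Hlam _ HLp Hcond a Ha.
  apply ex_series_Series_le_of_partial; [intros; apply rpow_ge0 |]. intros N.
  apply Rle_trans with
    (sum_f_R0 (fun n => rpow (sum_f_R0 (fun k => lam k / Lam lam n * Cmod (a k)) n) p) N).
  { apply sum_Rle. intros n _. apply rpow_le; [lra |].
    split; [apply Cmod_ge_0 | apply Cmod_wmean_le, Hlam]. }
  eapply Rle_trans.
  { apply (wmean_rpow_sum_le p L lam Hp Hlam HLp (fun k => Cmod (a k)) N Hcond).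
    intros k. apply Cmod_ge_0. }
  rewrite rpow_Rpower by (apply Rdiv_lt_0_compat; lra).
  apply Rmult_le_compat_l; [left; apply Rpower_pos |].
  apply sum_f_R0_le_Series; [intros; apply rpow_ge0 | exact Ha].
Qed.
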